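(* Let $(\mathbf{x}_t,\mathbf{z}_t,\mathbf{y}_t)_{t\ge0}$ be generated by generalized Bregman ADMM under the standing assumptions and Assumption 1, with $\mathbf{y}_0=\mathbf{0}$. Let $\bar{\mathbf{x}}_T=\frac1T\sum_{t=1}^T\mathbf{x}_t$ and $\bar{\mathbf{z}}_T=\frac1T\sum_{t=1}^T\mathbf{z}_t$. Let $\sigma=\min\{1,m^{\frac{2}{p}-1}\}$, $0<\gamma<\frac{\alpha\sigma}{2}$ and $\tau\le(\alpha\sigma-2\gamma)\rho$. Then for every KKT point $(\mathbf{x}^*,\mathbf{z}^*,\mathbf{y}^* )$ and every $T\ge1$, $$f(\bar{\mathbf{x}}_T)+g(\bar{\mathbf{z}}_T)-(f(\mathbf{x}^* )+g(\mathbf{z}^* ))\le\frac{D_1}{T},\qquad \|\mathbf{A}\bar{\mathbf{x}}_T+\mathbf{B}\bar{\mathbf{z}}_T-\mathbf{c}\|_2^2\le\frac{D(\mathbf{w}^*,\mathbf{w}_0)}{\gamma T},$$ where $D_1=\rho B_\phi(\mathbf{B}\mathbf{z}^*,\mathbf{B}\mathbf{z}_0)+\rho_{\mathbf{x}}B_{\varphi_{\mathbf{x}}}(\mathbf{x}^*,\mathbf{x}_0)+\rho_{\mathbf{z}}B_{\varphi_{\mathbf{z}}}(\mathbf{z}^*,\mathbf{z}_0)$.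
   Context: Problem: $f:\mathbb{R}^{n_1}\to\mathbb{R}\cup\{+\infty\}$ and $g:\mathbb{R}^{n_2}\to\mathbb{R}\cup\{+\infty\}$; $\mathbf{A}\in\mathbb{R}^{m\times n_1}$, $\mathbf{B}\in\mathbb{R}^{m\times n_2}$, $\mathbf{c}\in\mathbb{R}^m$; $\mathcal{X}\subseteq\mathbb{R}^{n_1}$, $\mathcal{Z}\subseteq\mathbb{R}^{n_2}$ convex; the problem is $\min f(\mathbf{x})+g(\mathbf{z})$ s.t. $\mathbf{x}\in\mathcal{X},\mathbf{z}\in\mathcal{Z},\mathbf{A}\mathbf{x}+\mathbf{B}\mathbf{z}=\mathbf{c}$. For a continuously differentiable, strictly convex function $\psi$ on (the relative interior of) a convex set, $B_\psi(\mathbf{u},\mathbf{v})=\psi(\mathbf{u})-\psi(\mathbf{v})-\langle\nabla\psi(\mathbf{v}),\mathbf{u}-\mathbf{v}\rangle\ge 0$. Three such functions are fixed: $\phi$ (on a convex subset of $\mathbb{R}^m$), $\varphi_{\mathbf{x}}$, $\varphi_{\mathbf{z}}$. Generalized Bregman ADMM: given $(\mathbf{x}_0,\mathbf{z}_0,\mathbf{y}_0)$ and parameters $\rho>0,\tau>0,\rho_{\mathbf{x}}\ge0,\rho_{\mathbf{z}}\ge0$, for $t\ge0$: $\mathbf{x}_{t+1}=\arg\min_{\mathbf{x}\in\mathcal{X}} f(\mathbf{x})+\langle\mathbf{y}_t,\mathbf{A}\mathbf{x}+\mathbf{B}\mathbf{z}_t-\mathbf{c}\rangle+\rho B_\phi(\mathbf{c}-\mathbf{A}\mathbf{x},\mathbf{B}\mathbf{z}_t)+\rho_{\mathbf{x}}B_{\varphi_{\mathbf{x}}}(\mathbf{x},\mathbf{x}_t)$;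 $\mathbf{z}_{t+1}=\arg\min_{\mathbf{z}\in\mathcal{Z}} g(\mathbf{z})+\langle\mathbf{y}_t,\mathbf{A}\mathbf{x}_{t+1}+\mathbf{B}\mathbf{z}-\mathbf{c}\rangle+\rho B_\phi(\mathbf{B}\mathbf{z},\mathbf{c}-\mathbf{A}\mathbf{x}_{t+1})+\rho_{\mathbf{z}}B_{\varphi_{\mathbf{z}}}(\mathbf{z},\mathbf{z}_t)$; $\mathbf{y}_{t+1}=\mathbf{y}_t+\tau(\mathbf{A}\mathbf{x}_{t+1}+\mathbf{B}\mathbf{z}_{t+1}-\mathbf{c})$. Standing assumptions: the minimizers exist; all Bregman divergences are evaluated at points where they are defined; and the minimizers satisfy the first-order optimality conditions $-\mathbf{A}^T\{\mathbf{y}_t+\rho(\nabla\phi(\mathbf{B}\mathbf{z}_t)-\nabla\phi(\mathbf{c}-\mathbf{A}\mathbf{x}_{t+1}))\}-\rho_{\mathbf{x}}(\nabla\varphi_{\mathbf{x}}(\mathbf{x}_{t+1})-\nabla\varphi_{\mathbf{x}}(\mathbf{x}_t))\in\partial f(\mathbf{x}_{t+1})$ and $-\mathbf{B}^T\{\mathbf{y}_t+\rho(\nabla\phi(\mathbf{B}\mathbf{z}_{t+1})-\nabla\phi(\mathbf{c}-\mathbf{A}\mathbf{x}_{t+1}))\}-\rho_{\mathbf{z}}(\nabla\varphi_{\mathbf{z}}(\mathbf{z}_{t+1})-\nabla\varphi_{\mathbf{z}}(\mathbf{z}_t))\in\partial g(\mathbf{z}_{t+1})$. Assumption 1: (a)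 $f,g$ are closed, proper, convex; (b) an optimal solution exists; (c) $B_\phi(\mathbf{u},\mathbf{v})\ge\frac{\alpha}{2}\|\mathbf{u}-\mathbf{v}\|_p^2$ for some $\alpha>0$, $p>0$. A KKT point is $(\mathbf{x}^*,\mathbf{z}^*,\mathbf{y}^* )$ with $-\mathbf{A}^T\mathbf{y}^*\in\partial f(\mathbf{x}^* )$, $-\mathbf{B}^T\mathbf{y}^*\in\partial g(\mathbf{z}^* )$, $\mathbf{A}\mathbf{x}^*+\mathbf{B}\mathbf{z}^*=\mathbf{c}$. With $\mathbf{w}_t=(\mathbf{x}_t,\mathbf{z}_t,\mathbf{y}_t)$, $\mathbf{w}^*=(\mathbf{x}^*,\mathbf{z}^*,\mathbf{y}^* )$: $D(\mathbf{w}^*,\mathbf{w}_t)=\frac{1}{2\tau\rho}\|\mathbf{y}^*-\mathbf{y}_t\|_2^2+B_\phi(\mathbf{B}\mathbf{z}^*,\mathbf{B}\mathbf{z}_t)+\frac{\rho_{\mathbf{x}}}{\rho}B_{\varphi_{\mathbf{x}}}(\mathbf{x}^*,\mathbf{x}_t)+\frac{\rho_{\mathbf{z}}}{\rho}B_{\varphi_{\mathbf{z}}}(\mathbf{z}^*,\mathbf{z}_t)$. *)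

From mathcomp Require Import all_boot.
From Stdlib Require Import Reals.
Open Scope R_scope.

Definition vec (n : nat) := 'I_n -> R.
Definition mat (m n : nat) := 'I_m -> 'I_n -> R.

Definition vsum {n : nat} (F : 'I_n -> R) : R := \big[Rplus/0]_(i < n) F i.
Definition vzero (n : nat) : vec n := fun _ => 0.
Definition vadd {n : nat} (u v : vec n) : vec n := fun i => u i + v i.
Definition vsub {n : nat} (u v : vec n) : vec n := fun i => u i - v i.
Definition vopp {n : nat} (u : vec n) : vec n := fun i => - u i.
Definition vscal {n : nat} (a : R) (u : vec n) : vec n := fun i => a * u i.
Definition inner {n : nat} (u v : vec n) : R := vsum (fun i => u i * v i).
Definition mv {m n : nat} (A : mat m n) (x : vec n) : vec m :=
  fun i => vsum (fun j => A i j * x j).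
Definition mtv {m n : nat} (A : mat m n) (y : vec m) : vec n :=
  fun j => vsum (fun i => A i j * y i).
Definition norm2 {n : nat} (u : vec n) : R := sqrt (inner u u).
(* real power with the convention 0^q = 0 (used for q > 0) *)
Definition rpow (x q : R) : R := if Req_EM_T x 0 then 0 else Rpower x q.
Definition normp {n : nat} (p : R) (u : vec n) : R :=
  rpow (vsum (fun i => rpow (Rabs (u i)) p)) (/ p).
Definition tsum {n : nat} (x : nat -> vec n) (T : nat) : vec n :=
  fun i => \big[Rplus/0]_(1 <= t < T.+1) x t i.
Definition tavg {n : nat} (x : nat -> vec n) (T : nat) : vec n :=
  vscal (/ INR T) (tsum x T).

Inductive ereal := Fin (r : R) | PInf.
Definition ele (a b : ereal) : Prop :=
  match a, b with
  | _, PInf => True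
  | PInf, Fin _ => False
  | Fin x, Fin y => x <= y
  end.
Definition eadd (a b : ereal) : ereal :=
  match a, b with Fin x, Fin y => Fin (x + y) | _, _ => PInf end.
Definition eaddr (a : ereal) (r : R) : ereal :=
  match a with Fin x => Fin (x + r) | PInf => PInf end.
Definition egtr (a : ereal) (r : R) : Prop :=
  match a with Fin x => r < x | PInf => True end.

Definition convex_set {n : nat} (S : vec n -> Prop) : Prop :=
  forall u v l, S u -> S v -> 0 <= l <= 1 ->
    S (vadd (vscal l u) (vscal (1 - l) v)).

Definition econvex {n : nat} (f : vec n -> ereal) : Prop :=
  forall u v a b l, f u = Fin a -> f v = Fin b -> 0 <= l <= 1 ->
    ele (f (vadd (vscal l u) (vscal (1 - l) v))) (Fin (l * a + (1 - l) * b)).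
(* proper: finite somewhere (and never -oo, built into the codomain) *)
Definition eproper {n : nat} (f : vec n -> ereal) : Prop :=
  exists u a, f u = Fin a.
(* closed = lower semicontinuous everywhere *)
Definition eclosed {n : nat} (f : vec n -> ereal) : Prop :=
  forall u r, egtr (f u) r ->
    exists d, d > 0 /\ forall v, norm2 (vsub v u) < d -> egtr (f v) r.
Definition subgrad {n : nat} (f : vec n -> ereal) (u s : vec n) : Prop :=
  exists a, f u = Fin a /\
    forall v, ele (Fin (a + inner s (vsub v u))) (f v).

(* psi : C -> R continuously differentiable and strictly convex, with gradient
   gpsi available on D (the (relative) interior of C, D subset of C). *)
Definition bregman_generator {n : nat} (C D : vec n -> Prop)
    (psi : vec n -> R) (gpsi : vec n -> vec n) : Prop :=
  convex_set C /\ convex_set D /\ (forall v, D v -> C v) /\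
  (forall u v l, C u -> C v -> u <> v -> 0 < l < 1 ->
     psi (vadd (vscal l u) (vscal (1 - l) v)) < l * psi u + (1 - l) * psi v) /\
  (forall v u eps, D v -> C u -> eps > 0 -> exists del, del > 0 /\
     forall h, 0 < h < del ->
       Rabs ((psi (vadd v (vscal h (vsub u v))) - psi v) / h
             - inner (gpsi v) (vsub u v)) < eps) /\
  (forall v eps, D v -> eps > 0 -> exists del, del > 0 /\
     forall w, D w -> norm2 (vsub w v) < del ->
       norm2 (vsub (gpsi w) (gpsi v)) < eps).

Definition breg {n : nat} (psi : vec n -> R) (gpsi : vec n -> vec n)
    (u v : vec n) : R :=
  psi u - psi v - inner (gpsi v) (vsub u v).

Definition admm_x_obj {n1 n2 m : nat} (f : vec n1 -> ereal)
    (A : mat m n1) (B : mat m n2) (c : vec m)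
    (phi : vec m -> R) (gphi : vec m -> vec m)
    (phx : vec n1 -> R) (gphx : vec n1 -> vec n1)
    (rho rhox : R) (xt : vec n1) (zt : vec n2) (yt : vec m) (x : vec n1) : ereal :=
  eaddr (f x)
    (inner yt (vsub (vadd (mv A x) (mv B zt)) c)
     + rho * breg phi gphi (vsub c (mv A x)) (mv B zt)
     + rhox * breg phx gphx x xt).

Definition admm_z_obj {n1 n2 m : nat} (g : vec n2 -> ereal)
    (A : mat m n1) (B : mat m n2) (c : vec m)
    (phi : vec m -> R) (gphi : vec m -> vec m)
    (phz : vec n2 -> R) (gphz : vec n2 -> vec n2)
    (rho rhoz : R) (xt1 : vec n1) (zt : vec n2) (yt : vec m) (z : vec n2) : ereal :=
  eaddr (g z)
    (inner yt (vsub (vadd (mv A xt1) (mv B z)) c)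
     + rho * breg phi gphi (mv B z) (vsub c (mv A xt1))
     + rhoz * breg phz gphz z zt).

(* The proof is a Lyapunov (energy) argument.  For a multiplier y' let
     E_t(y') = |y' - y_t|^2 / (2 tau) + rho B_phi(B z*, B z_t)
               + rho_x B_x(x*, x_t) + rho_z B_z(z*, z_t),
   i.e. rho D((x*, z*, y'), w_t).  One iteration satisfies
     gap_(t+1) + <y', r_(t+1)> + gamma rho |r_(t+1)|^2 <= E_t(y') - E_(t+1)(y'),
   where gap is the objective gap and r the constraint residual: the
   subgradient conditions of the two updates, the three-point identity of
   Bregman divergences and the multiplier update produce the right-hand side
   up to -rho B_phi(B z_(t+1), c - A x_(t+1)) and tau/2 |r|^2, and the strong
   convexity of phi (via sigma |u|_2^2 <= |u|_p^2) absorbs the latter and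
   gamma rho |r|^2 under the step-size condition.  Telescoping with y' = 0
   bounds the summed gaps, with y' = y* (where the KKT conditions make
   gap + <y*, r> nonnegative) bounds the summed squared residuals, and
   Jensen's inequality transfers both bounds to the ergodic averages. *)

From HB Require Import structures.
From mathcomp Require Import all_boot.
From Stdlib Require Import Reals Lra FunctionalExtensionality.
Open Scope R_scope.
Set Implicit Arguments.

HB.instance Definition _ := Monoid.isComLaw.Build R 0 Rplus
  (fun a b c => esym (Rplus_assoc a b c)) Rplus_comm Rplus_0_l.

Lemma vsum_ext n {F G : 'I_n -> R} : (forall i, F i = G i) -> vsum F = vsum G.
Proof. by move=> FG; apply: eq_bigr => i _. Qed.

Lemma vsumD n (F G : 'I_n -> R) : vsum (fun i => F i + G i) = vsum F + vsum G.
Proof. exact: big_split. Qed.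

Lemma sumZ (I : Type) (r : seq I) (P : pred I) (F : I -> R) a :
  \big[Rplus/0]_(i <- r | P i) (a * F i) = a * \big[Rplus/0]_(i <- r | P i) F i.
Proof.
apply: (big_rec2 (fun s t => s = a * t)); first by ring.
by move=> i s t _ ->; ring.
Qed.

Lemma vsumZ n a (F : 'I_n -> R) : vsum (fun i => a * F i) = a * vsum F.
Proof. exact: sumZ. Qed.

Lemma vsum_const n k : vsum (fun _ : 'I_n => k) = INR n * k.
Proof.
rewrite /vsum; elim: n => [|n IH]; first by rewrite big_ord0 /=; ring.
by rewrite big_ord_recr S_INR /= IH; ring.
Qed.

Lemma vsum_le n {F G : 'I_n -> R} : (forall i, F i <= G i) -> vsum F <= vsum G.
Proof.
move=> FG; apply: (big_rec2 (fun s t => s <= t)); first lra.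
by move=> i s t _ st; have := FG i; lra.
Qed.

Lemma vsum_ge0 n (F : 'I_n -> R) : (forall i, 0 <= F i) -> 0 <= vsum F.
Proof.
move=> F0; have -> : 0 = vsum (fun _ : 'I_n => 0) by rewrite vsum_const; ring.
exact: vsum_le.
Qed.

Lemma vsum_term_le n {F : 'I_n -> R} i : (forall j, 0 <= F j) -> F i <= vsum F.
Proof.
move=> F0; rewrite /vsum (bigD1 i) //=; set rest := (X in _ <= _ + X).
have : 0 <= rest by apply: (big_ind (fun s => 0 <= s)) => //; [lra | move=> ? ?; lra].
lra.
Qed.

Lemma vsum_dim_pos n (F : 'I_n -> R) : vsum F <> 0 -> 0 < INR n.
Proof.
by case: n F => [|n] F; [rewrite /vsum big_ord0 | move=> _; apply: lt_0_INR; apply/ltP].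
Qed.

Lemma vec_ext n (u v : vec n) : (forall i, u i = v i) -> u = v.
Proof. exact: functional_extensionality. Qed.

Section InnerProduct.
Variable n : nat.
Implicit Types u v w : vec n.

Lemma inner_sym u v : inner u v = inner v u.
Proof. by apply: vsum_ext => i; ring. Qed.

Lemma inner_addl u v w : inner (vadd u v) w = inner u w + inner v w.
Proof. by rewrite /inner -vsumD; apply: vsum_ext => i; rewrite /vadd; ring. Qed.

Lemma inner_addr u v w : inner w (vadd u v) = inner w u + inner w v.
Proof. by rewrite inner_sym inner_addl !(inner_sym w). Qed.

Lemma inner_scall a u w : inner (vscal a u) w = a * inner u w.
Proof. by rewrite /inner -vsumZ; apply: vsum_ext => i; rewrite /vscal; ring. Qed.

Lemma inner_scalr a u w : inner w (vscal a u) = a * inner w u.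
Proof. by rewrite inner_sym inner_scall inner_sym. Qed.

Lemma inner_oppl u w : inner (vopp u) w = - inner u w.
Proof.
have -> : vopp u = vscal (-1) u by apply: vec_ext => i; rewrite /vopp /vscal; ring.
by rewrite inner_scall; ring.
Qed.

Lemma inner_subl u v w : inner (vsub u v) w = inner u w - inner v w.
Proof.
have -> : vsub u v = vadd u (vopp v) by apply: vec_ext => i.
by rewrite inner_addl inner_oppl.
Qed.

Lemma inner_subr u v w : inner w (vsub u v) = inner w u - inner w v.
Proof. by rewrite inner_sym inner_subl !(inner_sym w). Qed.

Lemma inner_zeror u : inner u (vzero n) = 0.
Proof.
have -> : inner u (vzero n) = vsum (fun _ : 'I_n => 0).
  by apply: vsum_ext => i; rewrite /vzero; ring.
by rewrite vsum_const; ring.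
Qed.

Lemma inner_self_ge0 u : 0 <= inner u u.
Proof. by apply: vsum_ge0 => i; nra. Qed.

Lemma norm2_sq u : norm2 u ^ 2 = inner u u.
Proof. by rewrite /norm2 pow2_sqrt //; apply: inner_self_ge0. Qed.

End InnerProduct.

Lemma inner_mtv m n (A : mat m n) (y : vec m) (x : vec n) :
  inner (mtv A y) x = inner y (mv A x).
Proof.
rewrite /inner /mtv /mv.
transitivity (vsum (fun j => vsum (fun i => A i j * y i * x j))).
  by apply: vsum_ext => j; rewrite Rmult_comm -vsumZ; apply: vsum_ext => i; ring.
rewrite {1}/vsum exchange_big; apply: vsum_ext => i.
by rewrite -vsumZ; apply: vsum_ext => j; ring.
Qed.

Lemma mv_sub m n (A : mat m n) u v : mv A (vsub u v) = vsub (mv A u) (mv A v).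
Proof.
apply: vec_ext => i; rewrite /mv /vsub.
have -> : vsum (fun j => A i j * (u j - v j))
        = vsum (fun j => A i j * u j + (-1) * (A i j * v j)).
  by apply: vsum_ext => j; ring.
by rewrite vsumD vsumZ; ring.
Qed.

(* Writing s_i = u_i^2 and q = p/2 this reads, for q <= 1, the
   subadditivity  sum s_i <= (sum s_i^q)^(1/q), and for q >= 1 the
   power-mean inequality  m^(1/q - 1) sum s_i <= (sum s_i^q)^(1/q),
   the latter obtained by summing tangent-line bounds of s |-> s^q. *)

Lemma Rpower_pos x q : 0 < Rpower x q.
Proof. exact: exp_pos. Qed.

Lemma Rpower_peel x q : 0 < x -> Rpower x q = x * Rpower x (q - 1).
Proof.
by move=> x0; rewrite -{2}(Rpower_1 x x0) -Rpower_plus; congr Rpower; ring.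
Qed.

Lemma rpow_pos x q : 0 < x -> rpow x q = Rpower x q.
Proof. by move=> x0; rewrite /rpow; case: Req_EM_T => // E; lra. Qed.

Lemma rpow_0 q : rpow 0 q = 0.
Proof. by rewrite /rpow; case: Req_EM_T => // E; lra. Qed.

Lemma rpow_ge0 x q : 0 <= rpow x q.
Proof. by rewrite /rpow; case: Req_EM_T => E /=; [lra | apply: Rlt_le; apply: Rpower_pos]. Qed.

Lemma bernoulli x q : 0 < x -> 1 <= q -> 1 + q * (x - 1) <= Rpower x q.
Proof.
move=> x0 q1; rewrite Rpower_peel // /Rpower.
set L := ln x; have eL : exp L = x by apply: exp_ln.
(* from e^(-L) >= 1 - L and e^((q-1)L) >= 1 + (q-1)L *)
have inv : x * (1 - L) <= 1.
  have e1 : x * exp (- L) = 1 by rewrite -{1}eL -exp_plus Rplus_opp_r exp_0.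
  have : x * (1 - L) <= x * exp (- L).
    by apply: Rmult_le_compat_l; [lra | have := exp_ineq1_le (- L); lra].
  lra.
have tail : x * (1 + (q - 1) * L) <= x * exp ((q - 1) * L).
  by apply: Rmult_le_compat_l; [lra | apply: exp_ineq1_le].
have : 0 <= (q - 1) * (1 - x * (1 - L)) by apply: Rmult_le_pos; lra.
nra.
Qed.

Lemma rpow_tangent w M q : 0 < M -> 0 <= w -> 1 <= q ->
  Rpower M q + q * Rpower M (q - 1) * (w - M) <= rpow w q.
Proof.
move=> M0 w0 q1; have eM := @Rpower_peel M q M0; have pM := Rpower_pos M (q - 1).
have [w_eq|wn0] := Req_dec w 0.
  rewrite w_eq rpow_0 eM; have : 0 <= (q - 1) * (M * Rpower M (q - 1)).
    by apply: Rmult_le_pos; [lra | apply: Rmult_le_pos; lra].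
  lra.
have wM : 0 < w / M by apply: Rdiv_lt_0_compat; lra.
rewrite rpow_pos; last lra.
have -> : Rpower w q = Rpower M q * Rpower (w / M) q.
  by rewrite Rpower_mult_distr //; congr Rpower; field; lra.
have -> : q * Rpower M (q - 1) * (w - M) = Rpower M q * (q * (w / M - 1)).
  by rewrite eM; field; lra.
have := @bernoulli (w / M) q wM q1; have := Rpower_pos M q; nra.
Qed.

Section PowerSums.
Variables (m : nat) (s : vec m) (q : R).
Hypotheses (s_ge0 : forall i, 0 <= s i) (q_gt0 : 0 < q).

Let P := vsum (fun i => rpow (s i) q).

Lemma power_sum_ge0 : 0 <= P.
Proof. by apply: vsum_ge0 => i; apply: rpow_ge0. Qed.

Lemma sum_le_power_sum : q <= 1 -> vsum s <= rpow P (/ q).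
Proof.
move=> q1; have [P0|Ppos] := Req_dec P 0.
  have zero : forall i, s i <= 0.
    move=> i; have [si0|si0] := Req_dec (s i) 0; first lra.
    have := vsum_term_le i (fun j => rpow_ge0 (s j) q); rewrite -/P P0.
    rewrite rpow_pos; [have := Rpower_pos (s i) q; lra | have := s_ge0 i; lra].
  have := vsum_le zero; rewrite vsum_const Rmult_0_r; have := rpow_ge0 P (/ q); lra.
have P0 : 0 < P by have := power_sum_ge0; lra.
have iq : 1 <= / q by rewrite -Rinv_1; apply: Rinv_le_contravar.
have term : forall i, s i <= Rpower P (/ q - 1) * rpow (s i) q.
  move=> i; have [->|si0] := Req_dec (s i) 0; first by rewrite rpow_0; lra.
  have spos : 0 < s i by have := s_ge0 i; lra.
  rewrite rpow_pos // Rmult_comm; set t := Rpower (s i) q.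
  have -> : s i = t * Rpower t (/ q - 1).
    by rewrite -Rpower_peel ?Rpower_mult ?Rinv_r ?Rpower_1 //; [lra | apply: Rpower_pos].
  apply: Rmult_le_compat_l; first exact: Rlt_le (Rpower_pos _ _).
  apply: Rle_Rpower_l; first lra.
  split; first exact: Rpower_pos.
  by have := vsum_term_le i (fun j => rpow_ge0 (s j) q); rewrite rpow_pos.
by have := vsum_le term; rewrite vsumZ Rmult_comm -Rpower_peel // rpow_pos.
Qed.

Lemma power_mean : 1 <= q -> Rpower (INR m) (/ q - 1) * vsum s <= rpow P (/ q).
Proof.
move=> q1; have S0 : 0 <= vsum s by apply: vsum_ge0.
have [->|Spos] := Req_dec (vsum s) 0; first by rewrite Rmult_0_r; apply: rpow_ge0.
have m0 := vsum_dim_pos Spos.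
set M := vsum s / INR m; have M0 : 0 < M by apply: Rdiv_lt_0_compat; lra.
have tangent : INR m * Rpower M q <= P.
  have := vsum_le (fun i => rpow_tangent M0 (s_ge0 i) q1).
  rewrite vsumD vsum_const vsumZ.
  have -> : vsum (fun i => s i - M) = vsum s + INR m * (- M).
    by rewrite -vsum_const -vsumD; apply: vsum_ext => i.
  rewrite /P /M; have -> : vsum s + INR m * - (vsum s / INR m) = 0 by field; lra.
  lra.
have Ppos : 0 < P by have := Rpower_pos M q; nra.
rewrite rpow_pos //.
have -> : Rpower (INR m) (/ q - 1) * vsum s = Rpower (INR m * Rpower M q) (/ q).
  rewrite -Rpower_mult_distr ?Rpower_mult ?Rinv_r ?Rpower_1 //; try lra; last exact: Rpower_pos.
  by rewrite Rpower_plus Rpower_Ropp Rpower_1 // /M; field; lra.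
apply: Rle_Rpower_l; first exact: Rlt_le (Rinv_0_lt_compat _ q_gt0).
by split; first by apply: Rmult_lt_0_compat; [lra | apply: Rpower_pos].
Qed.

End PowerSums.

Definition pnorm_const (m : nat) (p : R) : R := Rmin 1 (Rpower (INR m) (2 / p - 1)).

Lemma rpow_abs_sq a p : 0 < p -> rpow (Rabs a) p = rpow (a * a) (p / 2).
Proof.
move=> p0; have [a0|an0] := Req_dec a 0.
  by rewrite a0 Rabs_R0 Rmult_0_l !rpow_0.
have abs0 : 0 < Rabs a by apply: Rabs_pos_lt.
have -> : a * a = Rabs a * Rabs a by rewrite -Rabs_mult Rabs_pos_eq //; nra.
rewrite !rpow_pos; try nra.
by rewrite -Rpower_mult_distr // -Rpower_plus; congr Rpower; field.
Qed.

Lemma normp_sq n p (u : vec n) : 0 < p ->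
  normp p u ^ 2 = rpow (vsum (fun i => rpow (u i * u i) (p / 2))) (/ (p / 2)).
Proof.
move=> p0; rewrite /normp (vsum_ext (fun i => rpow_abs_sq (u i) p0)).
set P := vsum _; have P0 : 0 <= P by apply: vsum_ge0 => i; apply: rpow_ge0.
have [->|Pn0] := Req_dec P 0; first by rewrite !rpow_0; ring.
rewrite !rpow_pos; try lra.
by rewrite /= Rmult_1_r -Rpower_plus; congr Rpower; field; lra.
Qed.

Lemma normp_sq_lower m p (u : vec m) : 0 < p ->
  pnorm_const m p * inner u u <= normp p u ^ 2.
Proof.
move=> p0; rewrite normp_sq //; set q := p / 2; have q0 : 0 < q by rewrite /q; lra.
have sq_ge0 : forall i, 0 <= u i * u i by move=> i; nra.
have S0 := inner_self_ge0 u.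
have [q1|q1] := Rle_lt_dec q 1.
  have := sum_le_power_sum _ sq_ge0 q0 q1.
  have : pnorm_const m p * inner u u <= 1 * inner u u.
    by apply: Rmult_le_compat_r => //; apply: Rmin_l.
  rewrite /inner; lra.
have := power_mean _ sq_ge0 q0 (Rlt_le _ _ q1).
have -> : / q - 1 = 2 / p - 1 by rewrite /q; field; lra.
have : pnorm_const m p * inner u u <= Rpower (INR m) (2 / p - 1) * inner u u.
  by apply: Rmult_le_compat_r => //; apply: Rmin_r.
rewrite /inner; lra.
Qed.

Definition time_sum (a : nat -> R) (T : nat) : R := \big[Rplus/0]_(1 <= t < T.+1) a t.

Lemma time_sum0 a : time_sum a 0 = 0.
Proof. exact: big_geq. Qed.

Lemma time_sumS a T : time_sum a T.+1 = time_sum a T + a T.+1.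
Proof. exact: big_nat_recr. Qed.

Lemma time_sumD (a b : nat -> R) T :
  time_sum (fun t => a t + b t) T = time_sum a T + time_sum b T.
Proof. exact: big_split. Qed.

Lemma time_sumZ k (a : nat -> R) T : time_sum (fun t => k * a t) T = k * time_sum a T.
Proof. exact: sumZ. Qed.

Lemma time_sum_const k T : time_sum (fun _ => k) T = INR T * k.
Proof. by elim: T => [|T IH]; rewrite ?time_sum0 ?time_sumS ?IH ?S_INR /=; ring. Qed.

Lemma time_sum_le (a b : nat -> R) T :
  (forall t, (1 <= t <= T)%nat -> a t <= b t) -> time_sum a T <= time_sum b T.
Proof.
elim: T => [|T IH] ab; rewrite ?time_sum0 ?time_sumS; first lra.
have : time_sum a T <= time_sum b T.
  by apply: IH => t /andP [t1 tT]; apply: ab; rewrite t1 (leq_trans tT).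
have := ab T.+1 (leqnn _); lra.
Qed.

Lemma tavgS n (u : nat -> vec n) T : (0 < T)%nat ->
  tavg u T.+1 = vadd (vscal (/ INR T.+1) (u T.+1)) (vscal (1 - / INR T.+1) (tavg u T)).
Proof.
move=> T0; have T0r : 0 < INR T by apply: lt_0_INR; apply/ltP.
apply: vec_ext => i; rewrite /tavg /vadd /vscal /tsum.
by rewrite -!/(time_sum (fun t => u t i) _) time_sumS S_INR; field; lra.
Qed.

Lemma jensen n {F : vec n -> ereal} {u : nat -> vec n} {val : nat -> R} {T} :
  econvex F -> (forall t, (1 <= t <= T)%nat -> F (u t) = Fin (val t)) -> (1 <= T)%nat ->
  exists b, F (tavg u T) = Fin b /\ b <= time_sum val T / INR T.
Proof.
move=> Fconv; elim: T => [|T IH] Fu // _.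
have [T0|T0] := posnP T.
  rewrite T0 in Fu *; have -> : tavg u 1 = u 1%nat.
    by apply: vec_ext => i; rewrite /tavg /vscal /tsum big_nat1 /=; field.
  exists (val 1%nat); split; first exact: Fu.
  by rewrite time_sumS time_sum0 /= /Rdiv Rinv_1; lra.
have [b [Fb b_le]] : exists b, F (tavg u T) = Fin b /\ b <= time_sum val T / INR T.
  by apply: IH => // t /andP [t1 tT]; apply: Fu; rewrite t1 (leq_trans tT).
have T0r : 0 < INR T by apply: lt_0_INR; apply/ltP.
set l := / INR T.+1; have l01 : 0 <= l <= 1.
  rewrite /l S_INR; split; first by apply: Rlt_le; apply: Rinv_0_lt_compat; lra.
  by rewrite -Rinv_1; apply: Rinv_le_contravar; lra.
have := Fconv _ _ _ _ _ (Fu T.+1 (leqnn _)) Fb l01; rewrite -tavgS //.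
case: (F (tavg u T.+1)) => [r|] // r_le; rewrite /ele in r_le; exists r; split => //.
have : (1 - l) * b <= (1 - l) * (time_sum val T / INR T) by apply: Rmult_le_compat_l; lra.
have -> : (1 - l) * (time_sum val T / INR T) = time_sum val T * l.
  by rewrite /l S_INR; field; lra.
by rewrite time_sumS /Rdiv Rmult_plus_distr_r -/l; lra.
Qed.

Definition sqnorm_e n (u : vec n) : ereal := Fin (inner u u).

Lemma sqnorm_e_convex n : econvex (@sqnorm_e n).
Proof.
move=> u v a b l [<-] [<-] l01 /=.
rewrite !inner_addl !inner_addr !inner_scall !inner_scalr (inner_sym v u).
have := inner_self_ge0 (vsub u v); rewrite !inner_subl !inner_subr (inner_sym v u).
have : 0 <= l * (1 - l) by nra.
nra.
Qed.

Lemma mv_tavg m n (A : mat m n) (x : nat -> vec n) T :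
  mv A (tavg x T) = tavg (fun t => mv A (x t)) T.
Proof.
apply: vec_ext => i; rewrite /tavg /vscal /tsum /mv /vsum exchange_big -sumZ.
by apply: eq_bigr => j _; rewrite -!sumZ; apply: eq_bigr => t _; ring.
Qed.

(* A divergence of a differentiable strictly convex generator is
   nonnegative: the difference quotients of psi along [v, u] lie below the
   chord slope psi u - psi v and converge to the directional derivative. *)
Lemma breg_ge0 n {C D : vec n -> Prop} {psi gpsi u v} :
  bregman_generator C D psi gpsi -> C u -> D v -> 0 <= breg psi gpsi u v.
Proof.
move=> [_ [_ [DC [strict [deriv _]]]]] Cu Dv; apply: Rnot_lt_le => neg.
have uv : u <> v.
  move=> E; move: neg; rewrite /breg E.
  have -> : vsub v v = vzero n by apply: vec_ext => i; rewrite /vsub /vzero; ring.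
  by rewrite inner_zeror; lra.
have [del [del0 close]] := deriv v u (- breg psi gpsi u v) Dv Cu ltac:(lra).
set h := Rmin (del / 2) (1 / 2).
have h0 : 0 < h by apply: Rmin_glb_lt; lra.
have h_del : 0 < h < del by have : h <= del / 2 := Rmin_l _ _; lra.
have h1 : 0 < h < 1 by have : h <= 1 / 2 := Rmin_r _ _; lra.
have chord : psi (vadd v (vscal h (vsub u v))) < h * psi u + (1 - h) * psi v.
  have -> : vadd v (vscal h (vsub u v)) = vadd (vscal h u) (vscal (1 - h) v).
    by apply: vec_ext => i; rewrite /vadd /vscal /vsub; ring.
  exact: strict u v h Cu (DC v Dv) uv h1.
have slope : (psi (vadd v (vscal h (vsub u v))) - psi v) / h < psi u - psi v.
  by apply: (Rmult_lt_reg_r h); [lra | rewrite /Rdiv Rmult_assoc Rinv_l; lra].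
move: (close h h_del) slope neg; rewrite /breg.
by move=> /Rabs_def2 [_]; lra.
Qed.

Lemma breg_three_point n (psi : vec n -> R) gpsi u v w :
  inner (vsub (gpsi v) (gpsi w)) (vsub u v)
  = breg psi gpsi u w - breg psi gpsi u v - breg psi gpsi v w.
Proof. by rewrite /breg !inner_subl !inner_subr; ring. Qed.

(* The two coupling terms of the x- and z-updates, with a = c - A x_(t+1),
   b = B z_t, b1 = B z_(t+1) and bs = B z*, telescope into phi-divergences
   (two applications of the three-point identity). *)
Lemma coupling_identity m (phi : vec m -> R) gphi (yt a b b1 bs : vec m) rho :
  inner (vadd yt (vscal rho (vsub (gphi b) (gphi a)))) (vsub a bs)
  + inner (vadd yt (vscal rho (vsub (gphi b1) (gphi a)))) (vsub bs b1)
  = - inner yt (vsub b1 a)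
    + rho * (breg phi gphi bs b - breg phi gphi bs b1
             - breg phi gphi a b - breg phi gphi b1 a).
Proof.
rewrite !inner_addl !inner_scall.
have -> : inner (vsub (gphi b) (gphi a)) (vsub a bs)
        = inner (vsub (gphi a) (gphi b)) (vsub bs a).
  by rewrite !inner_subl !inner_subr; ring.
by rewrite !(breg_three_point phi) !inner_subr; ring.
Qed.

Lemma dual_step n (y' yt y1 r : vec n) tau : tau <> 0 -> y1 = vadd yt (vscal tau r) ->
  inner (vsub y' yt) r
  = / (2 * tau) * (inner (vsub y' yt) (vsub y' yt) - inner (vsub y' y1) (vsub y' y1))
    + tau / 2 * inner r r.
Proof.
move=> tau0 ->.
have -> : vsub y' (vadd yt (vscal tau r)) = vsub (vsub y' yt) (vscal tau r).
  by apply: vec_ext => i; rewrite /vsub /vadd /vscal; ring.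
move: (vsub y' yt) => d.
by rewrite inner_subl !inner_subr !inner_scall !inner_scalr (inner_sym r d); field.
Qed.

Definition fin_part (a : ereal) : R := match a with Fin r => r | PInf => 0 end.

Lemma subgrad_fin n (F : vec n -> ereal) u s : subgrad F u s -> F u = Fin (fin_part (F u)).
Proof. by case=> a [-> _]. Qed.

Lemma subgrad_le n {F : vec n -> ereal} {u s v b} : subgrad F u s -> F v = Fin b ->
  fin_part (F u) + inner s (vsub v u) <= b.
Proof. by case=> a [Fu sub] Fv; have := sub v; rewrite Fu Fv. Qed.

Lemma prox_subgrad_bound n k {F : vec n -> ereal} {M : mat k n} {q : vec k}
    (psi : vec n -> R) {gpsi r} {u0 u1 us : vec n} {b} :
  subgrad F u1 (vsub (vopp (mtv M q)) (vscal r (vsub (gpsi u1) (gpsi u0)))) ->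
  F us = Fin b ->
  fin_part (F u1) - b <= inner q (mv M (vsub us u1))
    + r * (breg psi gpsi us u0 - breg psi gpsi us u1 - breg psi gpsi u1 u0).
Proof.
move=> sub Fs; have := subgrad_le sub Fs.
by rewrite inner_subl inner_oppl inner_mtv inner_scall (breg_three_point psi); lra.
Qed.

Section BregmanADMM.

Variables (n1 n2 m : nat) (f : vec n1 -> ereal) (g : vec n2 -> ereal).
Variables (A : mat m n1) (B : mat m n2) (c : vec m).
Variables (Cphi Dphi : vec m -> Prop) (phi : vec m -> R) (gphi : vec m -> vec m).
Variables (Cx Dx : vec n1 -> Prop) (phx : vec n1 -> R) (gphx : vec n1 -> vec n1).
Variables (Cz Dz : vec n2 -> Prop) (phz : vec n2 -> R) (gphz : vec n2 -> vec n2).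
Variables (rho tau rhox rhoz alpha p gamma : R).
Variables (x : nat -> vec n1) (z : nat -> vec n2) (y : nat -> vec m).
Variables (xs : vec n1) (zs : vec n2) (ys : vec m).

Hypotheses (phx_gen : bregman_generator Cx Dx phx gphx) (phz_gen : bregman_generator Cz Dz phz gphz).
Hypotheses (rho_gt0 : rho > 0) (tau_gt0 : tau > 0) (rhox_ge0 : rhox >= 0) (rhoz_ge0 : rhoz >= 0).
Hypotheses (alpha_gt0 : alpha > 0) (p_gt0 : p > 0) (gamma_gt0 : 0 < gamma).
Hypothesis step_size : tau <= (alpha * pnorm_const m p - 2 * gamma) * rho.
Hypothesis phi_strong : forall u v, Cphi u -> Dphi v ->
  breg phi gphi u v >= alpha / 2 * (normp p (vsub u v)) ^ 2.

Hypothesis dom_iter : forall t, Dphi (mv B (z t)) /\ Dphi (vsub c (mv A (x t.+1))) /\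
  Dx (x t) /\ Dz (z t).
Hypothesis dom_x : forall t, Cphi (vsub c (mv A (x t.+1))) /\ Cx (x t.+1).
Hypothesis dom_z : forall t, Cphi (mv B (z t.+1)) /\ Cz (z t.+1).

Hypothesis y_step : forall t,
  y t.+1 = vadd (y t) (vscal tau (vsub (vadd (mv A (x t.+1)) (mv B (z t.+1))) c)).
Hypothesis foc_x : forall t, subgrad f (x t.+1)
  (vsub (vopp (mtv A (vadd (y t)
           (vscal rho (vsub (gphi (mv B (z t))) (gphi (vsub c (mv A (x t.+1)))))))))
        (vscal rhox (vsub (gphx (x t.+1)) (gphx (x t))))).
Hypothesis foc_z : forall t, subgrad g (z t.+1)
  (vsub (vopp (mtv B (vadd (y t)
           (vscal rho (vsub (gphi (mv B (z t.+1))) (gphi (vsub c (mv A (x t.+1)))))))))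
        (vscal rhoz (vsub (gphz (z t.+1)) (gphz (z t))))).

Hypotheses (kkt_f : subgrad f xs (vopp (mtv A ys))) (kkt_g : subgrad g zs (vopp (mtv B ys))).
Hypothesis kkt_c : vadd (mv A xs) (mv B zs) = c.
Hypothesis kkt_dom : Cx xs /\ Cz zs /\ Cphi (mv B zs).

Definition residual t := vsub (vadd (mv A (x t)) (mv B (z t))) c.

Definition gap t :=
  fin_part (f (x t)) + fin_part (g (z t)) - (fin_part (f xs) + fin_part (g zs)).

(* rho times the distance D(w', w_t) to w' = (xs, zs, y') *)
Definition energy t (y' : vec m) :=
  / (2 * tau) * inner (vsub y' (y t)) (vsub y' (y t))
  + rho * breg phi gphi (mv B zs) (mv B (z t))
  + rhox * breg phx gphx xs (x t) + rhoz * breg phz gphz zs (z t).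

Definition progress (y' : vec m) t :=
  gap t + inner y' (residual t) + gamma * rho * inner (residual t) (residual t).

Lemma phi_lower u v : Cphi u -> Dphi v ->
  alpha * pnorm_const m p / 2 * inner (vsub u v) (vsub u v) <= breg phi gphi u v.
Proof.
move=> Cu Dv; have := phi_strong Cu Dv.
have : alpha / 2 * (pnorm_const m p * inner (vsub u v) (vsub u v))
       <= alpha / 2 * normp p (vsub u v) ^ 2.
  by apply: Rmult_le_compat_l; [lra | apply: normp_sq_lower].
lra.
Qed.

Lemma phi_breg_ge0 u v : Cphi u -> Dphi v -> 0 <= breg phi gphi u v.
Proof.
move=> Cu Dv; have := phi_strong Cu Dv.
have : 0 <= alpha / 2 * normp p (vsub u v) ^ 2.
  by apply: Rmult_le_pos; [lra | apply: pow2_ge_0].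
lra.
Qed.

Lemma one_step_descent t y' : progress y' t.+1 <= energy t y' - energy t.+1 y'.
Proof.
have [Ca Cx1] := dom_x t; have [Cb1 Cz1] := dom_z t.
have [Db [Da [Dx0 Dz0]]] := dom_iter t; have [_ [_ Cbs]] := kkt_dom.
have r1 : residual t.+1 = vsub (mv B (z t.+1)) (vsub c (mv A (x t.+1))).
  by apply: vec_ext => i; rewrite /residual /vsub /vadd; ring.
have xbound := prox_subgrad_bound phx (foc_x t) (subgrad_fin kkt_f).
have zbound := prox_subgrad_bound phz (foc_z t) (subgrad_fin kkt_g).
have Ax : mv A (vsub xs (x t.+1)) = vsub (vsub c (mv A (x t.+1))) (mv B zs).
  by rewrite mv_sub; apply: vec_ext => i; rewrite /vsub -kkt_c /vadd; ring.
rewrite Ax in xbound; rewrite mv_sub in zbound.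
have couple := coupling_identity phi gphi (y t) (vsub c (mv A (x t.+1)))
  (mv B (z t)) (mv B (z t.+1)) (mv B zs) rho.
rewrite -r1 in couple.
have dual := dual_step y' (Rgt_not_eq _ _ tau_gt0) (y_step t).
rewrite inner_subl -/(residual t.+1) in dual.
(* strong convexity of phi pays for the dual step and the gamma-term *)
have strong := phi_lower Cb1 Da; rewrite -r1 in strong.
set r2 := inner (residual t.+1) (residual t.+1) in dual strong *.
have r2_ge0 : 0 <= r2 by apply: inner_self_ge0.
have pay : tau / 2 * r2 + gamma * rho * r2 <= rho * (alpha * pnorm_const m p / 2 * r2).
  have : 0 <= ((alpha * pnorm_const m p - 2 * gamma) * rho - tau) * r2.
    by apply: Rmult_le_pos; lra.
  lra.
have := Rmult_le_compat_l _ _ _ (Rlt_le _ _ rho_gt0) strong.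
have := Rmult_le_pos _ _ (Rlt_le _ _ rho_gt0) (phi_breg_ge0 Ca Db).
have := Rmult_le_pos _ _ (Rge_le _ _ rhox_ge0) (breg_ge0 phx_gen Cx1 Dx0).
have := Rmult_le_pos _ _ (Rge_le _ _ rhoz_ge0) (breg_ge0 phz_gen Cz1 Dz0).
rewrite /progress /energy /gap -/r2; lra.
Qed.

Lemma progress_sum T y' : time_sum (progress y') T <= energy 0 y' - energy T y'.
Proof.
elim: T => [|T IH]; first by rewrite time_sum0; lra.
by rewrite time_sumS; have := one_step_descent T y'; lra.
Qed.

Lemma energy_ge0 t y' : 0 <= energy t y'.
Proof.
have [Dbt [_ [Dxt Dzt]]] := dom_iter t; have [Cxs [Czs Cbs]] := kkt_dom.
have := Rmult_le_pos _ _ (Rlt_le _ _ rho_gt0) (phi_breg_ge0 Cbs Dbt).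
have := Rmult_le_pos _ _ (Rge_le _ _ rhox_ge0) (breg_ge0 phx_gen Cxs Dxt).
have := Rmult_le_pos _ _ (Rge_le _ _ rhoz_ge0) (breg_ge0 phz_gen Czs Dzt).
have : 0 <= / (2 * tau) * inner (vsub y' (y t)) (vsub y' (y t)).
  by apply: Rmult_le_pos; [apply: Rlt_le; apply: Rinv_0_lt_compat; lra | apply: inner_self_ge0].
rewrite /energy; lra.
Qed.

Lemma f_iterate {t} : (1 <= t)%nat -> f (x t) = Fin (fin_part (f (x t))).
Proof. by case: t => [|t] // _; apply: subgrad_fin (foc_x t). Qed.

Lemma g_iterate {t} : (1 <= t)%nat -> g (z t) = Fin (fin_part (g (z t))).
Proof. by case: t => [|t] // _; apply: subgrad_fin (foc_z t). Qed.

(* Saddle-point inequality: the Lagrangian at ys is minimized at (xs, zs). *)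
Lemma kkt_gap {t} : (1 <= t)%nat -> 0 <= gap t + inner ys (residual t).
Proof.
move=> t1; have := subgrad_le kkt_f (f_iterate t1); have := subgrad_le kkt_g (g_iterate t1).
rewrite !inner_oppl !inner_mtv.
have -> : residual t = vadd (mv A (vsub (x t) xs)) (mv B (vsub (z t) zs)).
  by rewrite !mv_sub; apply: vec_ext => i; rewrite /residual /vsub /vadd -kkt_c /vadd; ring.
by rewrite inner_addr /gap; lra.
Qed.

Hypotheses (f_convex : econvex f) (g_convex : econvex g).
Hypothesis y0_zero : y 0%nat = vzero m.

(* Ergodic O(1/T) rate for the objective: telescope against y' = 0,
   then apply Jensen's inequality to f and g. *)
Lemma objective_rate T : (1 <= T)%nat ->
  exists a b a' b',
    f (tavg x T) = Fin a /\ g (tavg z T) = Fin b /\ f xs = Fin a' /\ g zs = Fin b' /\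
    a + b - (a' + b') <=
      (rho * breg phi gphi (mv B zs) (mv B (z 0%nat)) + rhox * breg phx gphx xs (x 0%nat)
       + rhoz * breg phz gphz zs (z 0%nat)) / INR T.
Proof.
move=> T1; have T0 : 0 < INR T by apply: lt_0_INR; apply/ltP.
have [a [Fa a_le]] := jensen (val := fun t => fin_part (f (x t))) f_convex
  (fun t tT => f_iterate (proj1 (andP tT))) T1.
have [b [Gb b_le]] := jensen (val := fun t => fin_part (g (z t))) g_convex
  (fun t tT => g_iterate (proj1 (andP tT))) T1.
exists a, b, (fin_part (f xs)), (fin_part (g zs)).
split; first exact: Fa.
split; first exact: Gb.
split; first exact: subgrad_fin kkt_f.
split; first exact: subgrad_fin kkt_g.
have gap_sum : time_sum gap T <= energy 0 (vzero m).
  have := progress_sum T (vzero m); have := energy_ge0 T (vzero m).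
  have : time_sum gap T <= time_sum (progress (vzero m)) T.
    apply: time_sum_le => t _; rewrite /progress inner_sym inner_zeror.
    by have := inner_self_ge0 (residual t); have := Rmult_lt_0_compat _ _ gamma_gt0 rho_gt0; nra.
  lra.
have split_gap : time_sum gap T = time_sum (fun t => fin_part (f (x t))) T
    + time_sum (fun t => fin_part (g (z t))) T + INR T * - (fin_part (f xs) + fin_part (g zs)).
  by rewrite -time_sum_const -!time_sumD; apply: eq_bigr => t _; rewrite /gap; ring.
have energy0 : energy 0 (vzero m) = rho * breg phi gphi (mv B zs) (mv B (z 0%nat))
    + rhox * breg phx gphx xs (x 0%nat) + rhoz * breg phz gphz zs (z 0%nat).
  rewrite /energy y0_zero.
  have -> : vsub (vzero m) (vzero m) = vzero m by apply: vec_ext => i; rewrite /vsub /vzero; ring.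
  by rewrite inner_zeror Rmult_0_r Rplus_0_l.
rewrite split_gap energy0 in gap_sum.
apply: Rle_trans (Rmult_le_compat_r _ _ _ (Rlt_le _ _ (Rinv_0_lt_compat _ T0)) gap_sum).
move: a_le b_le; rewrite /Rdiv; set K := fin_part (f xs) + fin_part (g zs).
rewrite !Rmult_plus_distr_r; have -> : INR T * - K * / INR T = - K by field; lra.
lra.
Qed.

Lemma residual_average T : (0 < T)%nat ->
  vsub (vadd (mv A (tavg x T)) (mv B (tavg z T))) c = tavg residual T.
Proof.
move=> T0; have T0r : 0 < INR T by apply: lt_0_INR; apply/ltP.
apply: vec_ext => i; rewrite !mv_tavg.
have -> : tavg residual T i = / INR T * (time_sum (fun t => mv A (x t) i) T
    + time_sum (fun t => mv B (z t) i) T + time_sum (fun _ => - c i) T).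
  by rewrite -!time_sumD.
by rewrite time_sum_const /tavg /vscal /vsub /vadd /time_sum /tsum; field; lra.
Qed.

(* Ergodic O(1/T) rate for the squared residual: telescope against the
   KKT multiplier ys, where the saddle-point inequality leaves only the
   gamma-term, then apply Jensen's inequality to the squared norm. *)
Lemma residual_rate T : (1 <= T)%nat ->
  norm2 (vsub (vadd (mv A (tavg x T)) (mv B (tavg z T))) c) ^ 2 <=
    (/ (2 * tau * rho) * norm2 (vsub ys (y 0%nat)) ^ 2
     + breg phi gphi (mv B zs) (mv B (z 0%nat))
     + rhox / rho * breg phx gphx xs (x 0%nat)
     + rhoz / rho * breg phz gphz zs (z 0%nat)) / (gamma * INR T).
Proof.
move=> T1; have T0 : 0 < INR T by apply: lt_0_INR; apply/ltP.
have [b [Fb b_le]] := jensen (val := fun t => inner (residual t) (residual t))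
  (@sqnorm_e_convex m) (fun t _ => erefl) T1.
case: Fb => Fb; rewrite !norm2_sq residual_average // Fb.
have res_sum : gamma * rho * time_sum (fun t => inner (residual t) (residual t)) T
    <= energy 0 ys.
  have := progress_sum T ys; have := energy_ge0 T ys; rewrite -time_sumZ.
  have : time_sum (fun t => gamma * rho * inner (residual t) (residual t)) T
      <= time_sum (progress ys) T.
    by apply: time_sum_le => t /andP [t1 _]; have := kkt_gap t1; rewrite /progress; lra.
  lra.
have energy0 : energy 0 ys = rho * (/ (2 * tau * rho) * inner (vsub ys (y 0%nat)) (vsub ys (y 0%nat))
    + breg phi gphi (mv B zs) (mv B (z 0%nat)) + rhox / rho * breg phx gphx xs (x 0%nat)
    + rhoz / rho * breg phz gphz zs (z 0%nat)).
  by rewrite /energy; field; lra.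
rewrite energy0 in res_sum; set D0 := (_ + _ + _ + _) in res_sum *.
apply: (Rle_trans _ _ _ b_le); rewrite /Rdiv Rinv_mult -Rmult_assoc.
apply: Rmult_le_compat_r; first exact: Rlt_le (Rinv_0_lt_compat _ T0).
apply: (Rmult_le_reg_l (gamma * rho)); first exact: Rmult_lt_0_compat.
have -> : gamma * rho * (D0 * / gamma) = rho * D0 by field; lra.
exact: res_sum.
Qed.

End BregmanADMM.

Unset Implicit Arguments.

Theorem theorem2
  (n1 n2 m : nat)
  (f : vec n1 -> ereal) (g : vec n2 -> ereal)
  (A : mat m n1) (B : mat m n2) (c : vec m)
  (X : vec n1 -> Prop) (Z : vec n2 -> Prop)
  (Cphi Dphi : vec m -> Prop) (phi : vec m -> R) (gphi : vec m -> vec m)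
  (Cx Dx : vec n1 -> Prop) (phx : vec n1 -> R) (gphx : vec n1 -> vec n1)
  (Cz Dz : vec n2 -> Prop) (phz : vec n2 -> R) (gphz : vec n2 -> vec n2)
  (rho tau rhox rhoz alpha p gamma : R)
  (x : nat -> vec n1) (z : nat -> vec n2) (y : nat -> vec m)
  (* problem data *)
  (HX : convex_set X) (HZ : convex_set Z)
  (Hphi : bregman_generator Cphi Dphi phi gphi)
  (Hphx : bregman_generator Cx Dx phx gphx)
  (Hphz : bregman_generator Cz Dz phz gphz)
  (* parameters *)
  (Hrho : rho > 0) (Htau : tau > 0) (Hrhox : rhox >= 0) (Hrhoz : rhoz >= 0)
  (* Assumption 1(a) *)
  (Hf : econvex f /\ eproper f /\ eclosed f)
  (Hg : econvex g /\ eproper g /\ eclosed g)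
  (* Assumption 1(b) *)
  (Hopt : exists xo zo, X xo /\ Z zo /\ vadd (mv A xo) (mv B zo) = c /\
     forall x' z', X x' -> Z z' -> vadd (mv A x') (mv B z') = c ->
       ele (eadd (f xo) (g zo)) (eadd (f x') (g z')))
  (* Assumption 1(c) *)
  (Halpha : alpha > 0) (Hp : p > 0)
  (Hstrong : forall u v, Cphi u -> Dphi v ->
     breg phi gphi u v >= alpha / 2 * (normp p (vsub u v)) ^ 2)
  (* standing assumption: Bregman divergences evaluated where defined *)
  (Hdom : forall t, Dphi (mv B (z t)) /\ Dphi (vsub c (mv A (x (S t)))) /\
                    Dx (x t) /\ Dz (z t))
  (* generalized Bregman ADMM iterations *)
  (Hy0 : y 0%nat = vzero m)
  (Hxstep : forall t, X (x (S t)) /\ Cphi (vsub c (mv A (x (S t)))) /\ Cx (x (S t)) /\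
     forall x', X x' -> Cphi (vsub c (mv A x')) -> Cx x' ->
       ele (admm_x_obj f A B c phi gphi phx gphx rho rhox (x t) (z t) (y t) (x (S t)))
           (admm_x_obj f A B c phi gphi phx gphx rho rhox (x t) (z t) (y t) x'))
  (Hzstep : forall t, Z (z (S t)) /\ Cphi (mv B (z (S t))) /\ Cz (z (S t)) /\
     forall z', Z z' -> Cphi (mv B z') -> Cz z' ->
       ele (admm_z_obj g A B c phi gphi phz gphz rho rhoz (x (S t)) (z t) (y t) (z (S t)))
           (admm_z_obj g A B c phi gphi phz gphz rho rhoz (x (S t)) (z t) (y t) z'))
  (Hystep : forall t, y (S t) =
     vadd (y t) (vscal tau (vsub (vadd (mv A (x (S t))) (mv B (z (S t)))) c)))
  (* standing assumption: first-order optimality conditions *)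
  (Hfoc_x : forall t, subgrad f (x (S t))
     (vsub (vopp (mtv A (vadd (y t)
              (vscal rho (vsub (gphi (mv B (z t))) (gphi (vsub c (mv A (x (S t))))))))))
           (vscal rhox (vsub (gphx (x (S t))) (gphx (x t))))))
  (Hfoc_z : forall t, subgrad g (z (S t))
     (vsub (vopp (mtv B (vadd (y t)
              (vscal rho (vsub (gphi (mv B (z (S t)))) (gphi (vsub c (mv A (x (S t))))))))))
           (vscal rhoz (vsub (gphz (z (S t))) (gphz (z t))))))
  (* step-size conditions *)
  (Hgamma : 0 < gamma < alpha * Rmin 1 (Rpower (INR m) (2 / p - 1)) / 2)
  (Htau_le : tau <= (alpha * Rmin 1 (Rpower (INR m) (2 / p - 1)) - 2 * gamma) * rho)
  (* a KKT point *)
  (xs : vec n1) (zs : vec n2) (ys : vec m)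
  (Hkkt_f : subgrad f xs (vopp (mtv A ys)))
  (Hkkt_g : subgrad g zs (vopp (mtv B ys)))
  (Hkkt_c : vadd (mv A xs) (mv B zs) = c)
  (Hkkt_dom : Cx xs /\ Cz zs /\ Cphi (mv B zs))
  (T : nat) (HT : (1 <= T)%nat) :
  (exists a b a' b',
     f (tavg x T) = Fin a /\ g (tavg z T) = Fin b /\
     f xs = Fin a' /\ g zs = Fin b' /\
     a + b - (a' + b') <=
       (rho * breg phi gphi (mv B zs) (mv B (z 0%nat))
        + rhox * breg phx gphx xs (x 0%nat)
        + rhoz * breg phz gphz zs (z 0%nat)) / INR T)
  /\
  (norm2 (vsub (vadd (mv A (tavg x T)) (mv B (tavg z T))) c)) ^ 2 <=
    (/ (2 * tau * rho) * (norm2 (vsub ys (y 0%nat))) ^ 2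
     + breg phi gphi (mv B zs) (mv B (z 0%nat))
     + rhox / rho * breg phx gphx xs (x 0%nat)
     + rhoz / rho * breg phz gphz zs (z 0%nat)) / (gamma * INR T).
Proof.
have [f_convex _] := Hf; have [g_convex _] := Hg.
have gamma_gt0 : 0 < gamma by case: Hgamma.
have dom_x : forall t, Cphi (vsub c (mv A (x t.+1))) /\ Cx (x t.+1).
  by move=> t; have [_ [Ca [Cx1 _]]] := Hxstep t.
have dom_z : forall t, Cphi (mv B (z t.+1)) /\ Cz (z t.+1).
  by move=> t; have [_ [Cb [Cz1 _]]] := Hzstep t.
split.
  exact: (objective_rate Cphi Dphi x z y Hphx Hphz Hrho Htau Hrhox Hrhoz Halpha Hp
    gamma_gt0 Htau_le Hstrong Hdom dom_x dom_z Hystep Hfoc_x Hfoc_z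
    Hkkt_f Hkkt_g Hkkt_c Hkkt_dom f_convex g_convex Hy0 T HT).
exact: (residual_rate Cphi Dphi x z y Hphx Hphz Hrho Htau Hrhox Hrhoz Halpha Hp
  gamma_gt0 Htau_le Hstrong Hdom dom_x dom_z Hystep Hfoc_x Hfoc_z
  Hkkt_f Hkkt_g Hkkt_c Hkkt_dom T HT).
Qed.
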